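(* For $K\ge 1$ define $\mathcal{R}:\mathbb{R}^K\times[0,1]\to\mathbb{R}$ by \[ \mathcal{R}(a_{1},\dots,a_{K},x)=\sum_{k=1}^{K}a_{k}\sin(2\pi kx). \] For fixed $A>0$, $K\ge1$ and any $0<\epsilon<1$, there exists an MLP network $\tilde{\mathcal{R}}:\mathbb{R}^{K+1}\to\mathbb{R}$, consisting of dense layers and $\tanh$ as activation function, with $O(K^{2}+K\log^{2}(K\epsilon^{-1}))$ weights, for which \[ |\tilde{\mathcal{R}}(a_{1},\dots,a_{K},x)-\mathcal{R}(a_{1},\dots,a_{K},x)|\leq\epsilon \] for all $a_{1},\dots,a_{K}\in[-A,A]$ and $x\in[0,1]$.
   Context: An MLP (multilayer perceptron) network is a feed-forward composition of layers, each of the form $v_j=\sigma\circ(M_j v_{j-1}+b_j)$ with a matrix $M_j$ and bias vector $b_j$ and coordinate-wise nonlinearity $\sigma$ (here $\sigma=\tanh$); in some layers the bias and/or the nonlinearity may be omitted. The ''number of weights'' is the total number of parameters (entries of all $M_j$ and $b_j$). *)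

From HB Require Import structures.
From mathcomp Require Import all_boot all_order all_algebra.
From mathcomp Require Import all_classical all_reals all_analysis.
Set Implicit Arguments. Unset Strict Implicit. Unset Printing Implicit Defensive.
Import Order.TTheory GRing.Theory Num.Theory.
Local Open Scope ring_scope.

Definition tanh {R : realType} (x : R) : R :=
  (expR x - expR (- x)) / (expR x + expR (- x)).

Record layer (R : realType) (n m : nat) := Layer {
  lay_M : 'M[R]_(m, n);
  lay_b : option 'cV[R]_m;
  lay_act : bool }.

Definition eval_layer (R : realType) n m (L : layer R n m) (v : 'cV[R]_n) : 'cV[R]_m :=
  let w := lay_M L *m v + (if lay_b L is Some b then b else 0) in
  if lay_act L then map_mx tanh w else w.

Definition layer_weights (R : realType) n m (L : layer R n m) : nat :=
  (m * n + (if lay_b L is Some _ then m else 0))%N.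

Inductive mlp (R : realType) : nat -> nat -> Type :=
| mlp_one n m : layer R n m -> mlp R n m
| mlp_cons n m p : layer R n m -> mlp R m p -> mlp R n p.

Fixpoint eval_mlp (R : realType) n m (N : mlp R n m) : 'cV[R]_n -> 'cV[R]_m :=
  match N with
  | mlp_one _ _ L => eval_layer L
  | mlp_cons _ _ _ L N' => fun v => eval_mlp N' (eval_layer L v)
  end.

Fixpoint num_weights (R : realType) n m (N : mlp R n m) : nat :=
  match N with
  | mlp_one _ _ L => layer_weights L
  | mlp_cons _ _ _ L N' => (layer_weights L + num_weights N')%N
  end.

(* R(a_1,...,a_K,x) = sum_{k=1}^K a_k sin(2 pi k x); a_{k+1} = a k for k : 'I_K *)
Definition Rsum (R : realType) (K : nat) (a : 'I_K -> R) (x : R) : R :=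
  \sum_(k < K) a k * sin (2 * pi * (k.+1)%:R * x).

From HB Require Import structures.
From mathcomp Require Import all_boot all_order all_algebra.
From mathcomp Require Import all_classical all_reals all_analysis.
From mathcomp Require Import ring lra zify.

(* Truncating the Taylor series of each sin(2 pi k x) at degree N = O(K + log(K A / eps))
   leaves a polynomial sum_(n < N) l_n x^n whose coefficients l_n are linear in a.
   The only nonlinearity needed to evaluate it is the exponential: the shifted and
   rescaled tanh unit e^(2c)/2 (1 + tanh (s/2 - c)) = e^s / (1 + e^(s - 2c)) is
   e^s up to e^(2s - 2c).  One tanh layer thus produces e^(h l_n) and e^(i h x), i < N;
   a linear layer turns them into (e^(h l_n) - 1)/h ~ l_n and into the finite
   differences h^-n sum_i C(n,i) (-1)^(n-i) e^(i h x) = ((e^(h x) - 1)/h)^n ~ x^n;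
   a second tanh layer and a linear layer multiply the two through
   (e^(g(u+v)) - e^(gu) - e^(gv) + 1)/g^2 ~ u v.  The four layers carry
   O(N^2 + N K) = O(K^2 + K log^2 (K/eps)) weights. *)

Set Implicit Arguments.
Unset Strict Implicit.
Unset Printing Implicit Defensive.

Import Order.TTheory GRing.Theory Num.Theory.
Local Open Scope ring_scope.

Section ExpEstimates.
Variable R : realType.
Implicit Types y z : R.

Lemma expR_sub1D_le y : `|y| <= 1/2 -> `|expR y - 1 - y| <= 2 * y ^+ 2.
Proof.
rewrite ler_norml => /andP[ylo yhi].
have ey := expR_gt0 y.
have lo := expR_ge1Dx y.
have hi : expR y * (1 - y) <= 1.
  have := expR_ge1Dx (- y); rewrite expRN => /(ler_wpM2r (ltW ey)).
  by rewrite mulVf ?gt_eqF // mulrC.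
rewrite ger0_norm; last lra.
have [y0|y0] := leP 0 y; nra.
Qed.

Lemma pow_div_fact_le_expR z n : 0 <= z -> z ^+ n / n`!%:R <= expR z.
Proof.
move=> z0; case: n => [|n]; last by have := expR_ge1Dxn n z0; lra.
by rewrite expr0 fact0 divr1; have := expR_ge1Dx z; lra.
Qed.

Lemma sum_expRN_le m n :
  \sum_(m <= i < m + n) expR (- i%:R) <= 2 * expR (- m%:R) - 2 * expR (- (m + n)%:R) :> R.
Proof.
elim: n => [|n IHn]; first by rewrite addn0 big_geq // subrr.
rewrite addnS big_nat_recr ?leq_addr //=.
have -> : expR (- (m + n).+1%:R) = expR (- (m + n)%:R) * expR (-1) :> R.
  by rewrite -expRD -addn1 natrD opprD.
have e1 : expR (-1) <= 1/2 :> R.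
  have := expRxMexpNx_1 (1 : R); have := expR_ge1Dx (1 : R).
  have := expR_gt0 (-1 : R); nra.
have := expR_gt0 (- (m + n)%:R : R); have := expR_gt0 (-1 : R); nra.
Qed.

End ExpEstimates.

Section SinTaylor.
Local Open Scope classical_set_scope.
Variable R : realType.
Implicit Types c x y : R.

Lemma sin_coeff_le y n : `|sin_coeff y n| <= expR (expR 1 * `|y| - n%:R).
Proof.
have sign_le1 : `|(odd n)%:R * (-1) ^+ n.-1./2| <= 1 :> R.
  by rewrite normrM normrX normrN normr1 expr1n mulr1 normr_nat; case: odd.
have : (expR 1 * `|y|) ^+ n / n`!%:R <= expR (expR 1 * `|y|).
  by apply: pow_div_fact_le_expR; rewrite mulr_ge0 ?expR_ge0.
rewrite exprMn -expRM_natl mulr1 expRB -mulrA mulrC -ler_pdivlMr ?expR_gt0 //.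
move=> h; apply: le_trans h.
rewrite /sin_coeff /= -mulrA normrM [`|_ / _|]normrM normfV normr_nat normrX.
by apply: ler_piMl; rewrite ?divr_ge0 ?exprn_ge0.
Qed.

Lemma sin_series_tail y n :
  `|sin y - series (sin_coeff y) n| <= 2 * expR (expR 1 * `|y| - n%:R).
Proof.
set b := 2 * expR (expR 1 * `|y| - n%:R).
have tail m : (n <= m)%N -> `|series (sin_coeff y) m - series (sin_coeff y) n| <= b.
  move=> nm; rewrite -(subnK nm) series_addn addrAC subrr add0r addnC.
  apply: (le_trans (ler_norm_sum _ _ _)).
  apply: (le_trans (ler_sum _ (fun i _ => sin_coeff_le y i))).
  under eq_bigr do rewrite expRD.
  rewrite -mulr_sumr /b expRD mulrCA ler_pM2l ?expR_gt0 //.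
  by apply: le_trans (sum_expRN_le _ _ _) _; rewrite lerBlDr lerDl mulr_ge0 ?expR_ge0.
have near_tail : \forall m \near \oo,
    `|series (sin_coeff y) m - series (sin_coeff y) n| <= b.
  by exists n => // m /= /tail.
rewrite unlock ler_norml; apply/andP; split.
- rewrite lerBrDr; apply: limr_ge; first exact: is_cvg_series_sin_coeff.
  by apply: filterS near_tail => m; rewrite ler_norml => /andP[]; lra.
- rewrite lerBlDr; apply: limr_le; first exact: is_cvg_series_sin_coeff.
  by apply: filterS near_tail => m; rewrite ler_norml => /andP[]; lra.
Qed.

Lemma sin_coeffM c x n : sin_coeff (c * x) n = sin_coeff c n * x ^+ n.
Proof. by rewrite /sin_coeff /= exprMn; ring. Qed.

End SinTaylor.

Section TanhExp.
Variable R : realType.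
Implicit Types c s U eta : R.

Definition tanh_exp c s : R := expR (2 * c) / 2 * (1 + tanh (s / 2 - c)).

Lemma tanh_expE c s : tanh_exp c s = expR s / (1 + expR (s - 2 * c)).
Proof.
rewrite /tanh_exp /tanh; set p := expR (s / 2 - c).
have p0 : 0 < p := expR_gt0 _.
have -> : expR (- (s / 2 - c)) = p^-1 by rewrite expRN.
have -> : expR (s - 2 * c) = p ^+ 2 by rewrite -expRM_natl; congr expR; field.
have -> : expR (2 * c) = expR s / p ^+ 2.
  by rewrite -expRM_natl -expRB; congr expR; field.
have pp1 : 1 + p ^+ 2 != 0 by rewrite gt_eqF // ltr_wpDr ?sqr_ge0.
by field; rewrite pp1 gt_eqF.
Qed.

Lemma tanh_exp_err c s : `|tanh_exp c s - expR s| <= expR (2 * s - 2 * c).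
Proof.
rewrite tanh_expE; set q := expR (s - 2 * c).
have q0 : 0 < q := expR_gt0 _.
have q1 : 0 < 1 + q by lra.
have e0 := expR_gt0 s.
have -> : expR (2 * s - 2 * c) = expR s * q by rewrite -expRD; congr expR; ring.
have -> : expR s / (1 + q) - expR s = - (expR s * q / (1 + q)).
  by field; rewrite gt_eqF.
have eq0 : 0 < expR s * q by rewrite mulr_gt0.
rewrite normrN ger0_norm; last by rewrite divr_ge0 // ltW.
by rewrite ler_pdivrMr // ler_pMr //; lra.
Qed.

Definition expR_approx (E : R -> R) U eta := forall s, `|s| <= U -> `|E s - expR s| <= eta.

Lemma expR_approx_le (E : R -> R) U U' eta :
  U' <= U -> expR_approx E U eta -> expR_approx E U' eta.
Proof. by move=> UU' EU s sU'; apply: EU; apply: le_trans UU'. Qed.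

Lemma tanh_exp_approx U eta : 0 < eta -> expR_approx (tanh_exp (U - ln eta / 2)) U eta.
Proof.
move=> eta0 s; rewrite ler_norml => /andP[_ sU].
apply: (le_trans (tanh_exp_err _ _)).
by rewrite -[X in _ <= X]lnK ?posrE // ler_expR; lra.
Qed.

End TanhExp.

Section ExpProduct.
Variable R : realType.
Implicit Types (E : R -> R) (g u v B eta delta : R).

Definition exp_mul E g u v := (E (g * (u + v)) - E (g * u) - E (g * v) + 1) / g ^+ 2.

Lemma expR_remainder_le g u B : 0 < g -> `|u| <= B -> g * B <= 1/2 ->
  `|(expR (g * u) - 1 - g * u) / g| <= 2 * g * B ^+ 2.
Proof.
move=> g0 uB gB; have B0 : 0 <= B by apply: le_trans uB.
have guB : `|g * u| <= 1/2.
  by rewrite normrM gtr0_norm //; apply: le_trans gB; rewrite ler_pM2l.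
rewrite normrM normfV (gtr0_norm g0) ler_pdivrMr //.
apply: (le_trans (expR_sub1D_le guB)); rewrite exprMn.
have : u ^+ 2 <= B ^+ 2 by move: uB; rewrite ler_norml => /andP[]; nra.
nra.
Qed.

Lemma exp_mul_expR_err g u v B : 0 < g -> `|u| <= B -> `|v| <= B -> g * B <= 1/2 ->
  `|exp_mul expR g u v - u * v| <= 6 * g * B ^+ 3.
Proof.
move=> g0 uB vB gB; have B0 : 0 <= B by apply: le_trans uB.
set ru := (expR (g * u) - 1 - g * u) / g; set rv := (expR (g * v) - 1 - g * v) / g.
have -> : exp_mul expR g u v - u * v = u * rv + ru * (v + rv).
  by rewrite /exp_mul mulrDr expRD /ru /rv; field; rewrite gt_eqF.
have ruB : `|ru| <= 2 * g * B ^+ 2 := expR_remainder_le g0 uB gB.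
have rvB : `|rv| <= 2 * g * B ^+ 2 := expR_remainder_le g0 vB gB.
clearbody ru rv.
have vrvB : `|v + rv| <= 2 * B.
  by apply: (le_trans (ler_normD _ _)); nra.
apply: (le_trans (ler_normD _ _)); rewrite !normrM.
have -> : 6 * g * B ^+ 3 = B * (2 * g * B ^+ 2) + 2 * g * B ^+ 2 * (2 * B) by ring.
by apply: lerD; apply: ler_pM.
Qed.

Lemma exp_mul_approx E g B eta u v : 0 < g -> expR_approx E (2 * g * B) eta ->
  `|u| <= B -> `|v| <= B -> `|exp_mul E g u v - exp_mul expR g u v| <= 3 * eta / g ^+ 2.
Proof.
move=> g0 EB uB vB.
have gwB w : `|w| <= B -> `|g * w| <= 2 * g * B.
  move=> wB; rewrite normrM gtr0_norm //.
  have := normr_ge0 w; nra.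
have uvB : `|u + v| <= B + B by apply: le_trans (ler_normD _ _) (lerD uB vB).
have e1 : `|E (g * (u + v)) - expR (g * (u + v))| <= eta.
  by apply: EB; rewrite normrM gtr0_norm //; have := normr_ge0 (u + v); nra.
have e2 := EB _ (gwB _ uB); have e3 := EB _ (gwB _ vB).
rewrite /exp_mul -mulrBl normrM normfV normrX (gtr0_norm g0) ler_pM2r ?invr_gt0 ?exprn_gt0 //.
have -> : E (g * (u + v)) - E (g * u) - E (g * v) + 1 -
    (expR (g * (u + v)) - expR (g * u) - expR (g * v) + 1) =
    (E (g * (u + v)) - expR (g * (u + v))) - (E (g * u) - expR (g * u))
    - (E (g * v) - expR (g * v)) by ring.
apply: (le_trans (ler_normB _ _)).
have := ler_normB (E (g * (u + v)) - expR (g * (u + v))) (E (g * u) - expR (g * u)).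
lra.
Qed.

Lemma exp_mul_err E g B eta u v u0 v0 delta : 0 < g -> g * B <= 1/2 ->
  expR_approx E (2 * g * B) eta -> `|u| <= B -> `|v| <= B -> `|v0| <= B ->
  `|u - u0| <= delta -> `|v - v0| <= delta ->
  `|exp_mul E g u v - u0 * v0| <= 3 * eta / g ^+ 2 + 6 * g * B ^+ 3 + 2 * B * delta.
Proof.
move=> g0 gB EB uB vB v0B uu0 vv0.
have approx := exp_mul_approx g0 EB uB vB.
have exact_err := exp_mul_expR_err g0 uB vB gB.
have prod_err : `|u * v - u0 * v0| <= 2 * B * delta.
  have -> : u * v - u0 * v0 = u * (v - v0) + (u - u0) * v0 by ring.
  apply: (le_trans (ler_normD _ _)); rewrite !normrM.
  have -> : 2 * B * delta = B * delta + delta * B by ring.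
  by apply: lerD; apply: ler_pM.
have -> : exp_mul E g u v - u0 * v0 = (exp_mul E g u v - exp_mul expR g u v)
    + (exp_mul expR g u v - u * v) + (u * v - u0 * v0) by ring.
apply: (le_trans (ler_normD _ _)).
have := ler_normD (exp_mul E g u v - exp_mul expR g u v) (exp_mul expR g u v - u * v).
lra.
Qed.

End ExpProduct.

Section ExpPower.
Variable R : realType.
Implicit Types (E : R -> R) (h l w x B M eta : R).

Definition exp_lin E h l := (E (h * l) - 1) / h.

Definition exp_pow E h x n :=
  h ^- n * \sum_(i < n.+1) 'C(n, i)%:R * ((-1) ^+ (n - i) * E (i%:R * (h * x))).

Lemma exp_lin_err E h l B eta : 0 < h -> h * B <= 1/2 -> `|l| <= B ->
  expR_approx E (h * B) eta -> `|exp_lin E h l - l| <= eta / h + 2 * h * B ^+ 2.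
Proof.
move=> h0 hB lB EB.
have -> : exp_lin E h l - l =
    (E (h * l) - expR (h * l)) / h + (expR (h * l) - 1 - h * l) / h.
  by rewrite /exp_lin; field; rewrite gt_eqF.
apply: (le_trans (ler_normD _ _)); apply: lerD; last exact: expR_remainder_le.
rewrite normrM normfV (gtr0_norm h0) ler_pM2r ?invr_gt0 //.
by apply: EB; rewrite normrM (gtr0_norm h0) ler_pM2l.
Qed.

Lemma sum_binomial n : \sum_(i < n.+1) 'C(n, i)%:R = 2 ^+ n :> R.
Proof.
by rewrite -[2]/(1 + 1 : R) exprDn; apply: eq_bigr => i _; rewrite !expr1n mulr1.
Qed.

Lemma exp_pow_expR h x n : h != 0 -> exp_pow expR h x n = ((expR (h * x) - 1) / h) ^+ n.
Proof.
move=> h0; rewrite /exp_pow exprMn exprVn mulrC addrC exprDn; congr (_ * _).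
by apply: eq_bigr => i _; rewrite expRM_natl mulr_natl.
Qed.

Lemma normrXB_le w x M n : `|w| <= M -> `|x| <= M ->
  `|w ^+ n - x ^+ n| <= n%:R * M ^+ n.-1 * `|w - x|.
Proof.
move=> wM xM; have M0 : 0 <= M by apply: le_trans wM.
rewrite subrXX normrM mulrC ler_wpM2r //.
apply: (le_trans (ler_norm_sum _ _ _)).
have -> : n%:R * M ^+ n.-1 = \sum_(i < n) M ^+ n.-1.
  by rewrite sumr_const card_ord mulr_natl.
apply: ler_sum => i _; rewrite normrM !normrX.
rewrite -(subnK (_ : i <= n.-1)%N) ?exprD; last by have := ltn_ord i; lia.
rewrite addnK.
by apply: ler_pM; rewrite ?exprn_ge0 // lerXn2r // nnegrE.
Qed.

Lemma exp_pow_approx E h x n eta : 0 < h -> 0 <= x <= 1 -> expR_approx E (n%:R * h) eta ->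
  `|exp_pow E h x n - exp_pow expR h x n| <= (2 / h) ^+ n * eta.
Proof.
move=> h0 /andP[x0 x1] EB; have hn0 : 0 < h ^- n by rewrite invr_gt0 exprn_gt0.
rewrite /exp_pow -mulrBr -sumrB normrM (gtr0_norm hn0).
have -> : (2 / h) ^+ n * eta = h ^- n * \sum_(i < n.+1) 'C(n, i)%:R * eta.
  by rewrite -mulr_suml sum_binomial exprMn exprVn mulrCA mulrA.
rewrite ler_pM2l //; apply: (le_trans (ler_norm_sum _ _ _)); apply: ler_sum => i _.
rewrite -!mulrBr normrM normr_nat ler_wpM2l //.
rewrite normrM normrX normrN normr1 expr1n mul1r; apply: EB.
rewrite normrM normr_nat normrM (gtr0_norm h0) ger0_norm //.
apply: ler_pM => //; first by rewrite mulr_ge0 // ltW.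
  by rewrite ler_nat -ltnS.
by rewrite -[X in _ <= X]mulr1 ler_pM2l.
Qed.

Lemma exp_pow_expR_err h x n : 0 < h -> h <= 1/2 -> 0 <= x <= 1 ->
  `|exp_pow expR h x n - x ^+ n| <= n%:R * 2 ^+ n * h.
Proof.
move=> h0 h1 /andP[x0 x1]; rewrite exp_pow_expR ?gt_eqF //.
set w := (expR (h * x) - 1) / h.
have wx : `|w - x| <= 2 * h.
  have hx : `|x| <= 1 by rewrite ger0_norm.
  have h1' : h * 1 <= 1/2 by rewrite mulr1.
  have := expR_remainder_le h0 hx h1'; rewrite expr1n mulr1.
  by have -> : w - x = (expR (h * x) - 1 - h * x) / h by rewrite /w; field; rewrite gt_eqF.
have w2 : `|w| <= 2.
  rewrite -[w](subrK x); apply: (le_trans (ler_normD _ _)).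
  by rewrite [`|x|]ger0_norm //; lra.
have x2 : `|x| <= 2 by rewrite ger0_norm //; lra.
apply: (le_trans (normrXB_le n w2 x2)).
case: n => [|n]; first by rewrite !mul0r.
rewrite exprS /= (_ : _ * (2 * 2 ^+ n) * h = n.+1%:R * 2 ^+ n * (2 * h)); last by ring.
by apply: ler_wpM2l; rewrite ?mulr_ge0 ?exprn_ge0.
Qed.

Lemma exp_pow_err E h x n eta : 0 < h -> h <= 1/2 -> 0 <= x <= 1 ->
  expR_approx E (n%:R * h) eta ->
  `|exp_pow E h x n - x ^+ n| <= (2 / h) ^+ n * eta + n%:R * 2 ^+ n * h.
Proof.
move=> h0 h1 x01 EB; rewrite -(subrK (exp_pow expR h x n) (exp_pow E h x n)) -addrA.
apply: (le_trans (ler_normD _ _)); apply: lerD.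
  exact: exp_pow_approx.
exact: exp_pow_expR_err.
Qed.

End ExpPower.

Definition approx_monomial (R : realType) (h c1 g c2 l x : R) n :=
  exp_mul (tanh_exp c2) g (exp_lin (tanh_exp c1) h l) (exp_pow (tanh_exp c1) h x n).

Section ApproxMonomial.
Variables (R : realType) (N : nat) (B e : R).
Hypotheses (B_ge2 : 2 <= B) (e_gt0 : 0 < e) (e_le1 : e <= 1).

(* Each of the three error terms of [exp_mul_err] gets [e / 3]; [h] and [eta1]
   keep [exp_lin] and [exp_pow] within [delta] of [l] and [x ^+ n]. *)
Let g := e / (18 * B ^+ 3).
Let eta2 := e * g ^+ 2 / 9.
Let delta := e / (6 * B).
Let h := delta / (4 * B ^+ 2 * (N.+1%:R * 2 ^+ N)).
Let eta1 := delta / 2 * (h / 2) ^+ N.+1.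

Let B_gt0 : 0 < B. Proof. by apply: lt_le_trans B_ge2. Qed.
Let g_gt0 : 0 < g. Proof. by rewrite divr_gt0 // mulr_gt0 // exprn_gt0. Qed.
Let delta_gt0 : 0 < delta. Proof. by rewrite divr_gt0 // mulr_gt0. Qed.
Let NN_ge1 : 1 <= N.+1%:R * 2 ^+ N :> R.
Proof. by apply: mulr_ege1; [rewrite ler1n | apply: exprn_ege1; rewrite ler1n]. Qed.
Let h_gt0 : 0 < h.
Proof. by rewrite divr_gt0 // !mulr_gt0 ?exprn_gt0 // (lt_le_trans ltr01). Qed.
Let eta1_gt0 : 0 < eta1.
Proof. by apply: mulr_gt0; [exact: divr_gt0 | apply: exprn_gt0; exact: divr_gt0]. Qed.
Let eta2_gt0 : 0 < eta2.
Proof. by apply: divr_gt0 => //; rewrite mulr_gt0 // exprn_gt0. Qed.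

Let gB_le : g * B <= 1/2.
Proof.
have B2 := B_ge2; have e1 := e_le1.
have -> : g * B = e / (18 * B ^+ 2) by rewrite /g; field; rewrite gt_eqF.
by rewrite ler_pdivrMr ?mulr_gt0 ?exprn_gt0 //; nra.
Qed.

Let error_split : 3 * eta2 / g ^+ 2 + 6 * g * B ^+ 3 + 2 * B * delta = e.
Proof. by rewrite /eta2 /g /delta; field; rewrite !gt_eqF. Qed.

Let delta_le1 : delta <= 1.
Proof.
have B2 := B_ge2; have e1 := e_le1.
by rewrite ler_pdivrMr ?mulr_gt0 //; lra.
Qed.

Let hN_eq : h * (N.+1%:R * 2 ^+ N) = delta / (4 * B ^+ 2).
Proof. by rewrite /h; field; rewrite !gt_eqF ?exprn_gt0 // (lt_le_trans ltr01). Qed.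

Let h_le : h <= delta / (4 * B ^+ 2).
Proof. by rewrite -hN_eq ler_peMr // ltW. Qed.

Let hB_le : h * B <= 1/2.
Proof.
apply: le_trans (ler_wpM2r (ltW B_gt0) h_le) _.
have -> : delta / (4 * B ^+ 2) * B = delta / (4 * B) by field; rewrite gt_eqF.
rewrite ler_pdivrMr ?mulr_gt0 //.
by have := delta_le1; have := B_ge2; lra.
Qed.

Let h_le_half : h <= 1/2.
Proof. by have := hB_le; have := B_ge2; have := h_gt0; nra. Qed.

Let hB2_le : 2 * h * B ^+ 2 <= delta / 2.
Proof.
have := ler_wpM2r (exprn_ge0 2 (ltW B_gt0)) h_le.
have -> : delta / (4 * B ^+ 2) * B ^+ 2 = delta / 4 by field; rewrite gt_eqF.
lra.
Qed.

Let pow_h_le n : (n <= N)%N -> n%:R * 2 ^+ n * h <= delta / 2.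
Proof.
move=> nN; apply: (@le_trans _ _ (N.+1%:R * 2 ^+ N * h)).
  apply: ler_wpM2r; first exact: ltW.
  apply: ler_pM; [exact: ler0n | exact: exprn_ge0 | by rewrite ler_nat leqW |].
  by apply: ler_weXn2l; rewrite ?ler1n.
rewrite mulrC hN_eq ler_pdivrMr ?mulr_gt0 ?exprn_gt0 //.
have B4 : 4 <= B ^+ 2 by have := B_ge2; nra.
by have := delta_gt0; nra.
Qed.

Let h_half_le1 k : (h / 2) ^+ k <= 1.
Proof.
by apply: exprn_ile1; [rewrite divr_ge0 // ltW | have := h_le_half; lra].
Qed.

Let eta1_div_h : eta1 / h <= delta / 2.
Proof.
have -> : eta1 / h = delta / 4 * (h / 2) ^+ N by rewrite /eta1 exprS; field; rewrite gt_eqF.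
have := h_half_le1 N; have : 0 <= (h / 2) ^+ N by rewrite exprn_ge0 // divr_ge0 // ltW.
by have := delta_gt0; nra.
Qed.

Let eta1_pow n : (n <= N)%N -> (2 / h) ^+ n * eta1 <= delta / 2.
Proof.
move=> nN; have inv_pow : (2 / h) ^+ n * (h / 2) ^+ n = 1.
  by rewrite -exprMn (_ : 2 / h * (h / 2) = 1) ?expr1n //; field; rewrite gt_eqF.
have -> : (2 / h) ^+ n * eta1 =
    delta / 2 * (h / 2) ^+ (N.+1 - n) * ((2 / h) ^+ n * (h / 2) ^+ n).
  by rewrite /eta1 -{1}(subnK (leqW nN)) exprD; ring.
by rewrite inv_pow mulr1 ler_piMr // divr_ge0 // ltW.
Qed.

Lemma approx_monomial_exists : exists h c1 g c2 : R, forall n l x,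
  (n < N)%N -> `|l| <= B - 2 -> 0 <= x <= 1 ->
  `|approx_monomial h c1 g c2 l x n - l * x ^+ n| <= e.
Proof.
pose U1 := h * (B + N%:R).
pose E1 := tanh_exp (U1 - ln eta1 / 2).
have E1_approx : expR_approx E1 U1 eta1 := tanh_exp_approx eta1_gt0.
exists h, (U1 - ln eta1 / 2), g, (2 * g * B - ln eta2 / 2) => n l x nN lB x01.
have B2 := B_ge2; have delta1 := delta_le1.
have lB' : `|l| <= B by lra.
have p_err : `|exp_lin E1 h l - l| <= delta.
  have EhB : expR_approx E1 (h * B) eta1.
    by apply: expR_approx_le E1_approx; rewrite ler_pM2l // lerDl.
  have := exp_lin_err h_gt0 hB_le lB' EhB.
  by have := eta1_div_h; have := hB2_le; lra.
have q_err : `|exp_pow E1 h x n - x ^+ n| <= delta.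
  have Enh : expR_approx E1 (n%:R * h) eta1.
    apply: expR_approx_le E1_approx; rewrite mulrC ler_pM2l //.
    by apply: ler_wpDl; [exact: ltW | rewrite ler_nat ltnW].
  have := exp_pow_err h_gt0 h_le_half x01 Enh.
  have := eta1_pow (ltnW nN); have := pow_h_le (ltnW nN); lra.
have xn1 : `|x ^+ n| <= 1.
  by case/andP: x01 => x0 x1; rewrite normrX ger0_norm // exprn_ile1.
have p_le : `|exp_lin E1 h l| <= B.
  by rewrite -[exp_lin _ _ _](subrK l); apply: (le_trans (ler_normD _ _)); lra.
have q_le : `|exp_pow E1 h x n| <= B.
  by rewrite -[exp_pow _ _ _ _](subrK (x ^+ n)); apply: (le_trans (ler_normD _ _)); lra.
rewrite -error_split; apply: exp_mul_err => //; first exact: tanh_exp_approx.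
lra.
Qed.

End ApproxMonomial.

Lemma approx_poly_exists (R : realType) (N : nat) (B eps : R) : 0 <= B -> 0 < eps <= 1 ->
  exists h c1 g c2 : R, forall (l : 'I_N -> R) x, (forall n, `|l n| <= B) -> 0 <= x <= 1 ->
    `|\sum_(n < N) approx_monomial h c1 g c2 (l n) x n - \sum_(n < N) l n * x ^+ n| <= eps.
Proof.
move=> B0 /andP[eps0 eps1]; have N0 : 0 < N.+1%:R :> R by rewrite ltr0n.
have e0 : 0 < eps / N.+1%:R by rewrite divr_gt0.
have e1 : eps / N.+1%:R <= 1 by rewrite ler_pdivrMr // mul1r (le_trans eps1) // ler1n.
have B2 : 2 <= B + 2 by rewrite lerDr.
have [h [c1 [g [c2 mono]]]] := approx_monomial_exists N B2 e0 e1.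
exists h, c1, g, c2 => l x lB x01.
rewrite -sumrB; apply: (le_trans (ler_norm_sum _ _ _)).
apply: (@le_trans _ _ (\sum_(n < N) eps / N.+1%:R)).
  by apply: ler_sum => n _; apply: mono => //; rewrite addrK.
rewrite sumr_const card_ord -(mulr_natr (eps / _)) mulrAC ler_pdivrMr // ler_pM2l //.
by rewrite ler_nat.
Qed.

Section Network.
Variables (R : realType) (K N : nat) (beta : 'M[R]_(N, K)) (h c1 g c2 : R).

Let k1 := expR (2 * c1) / 2.
Let k2 := expR (2 * c2) / 2.

Definition coeff_proj : 'M[R]_(K, K.+1) := \matrix_(k, j) (j == widen_ord (leqnSn K) k)%:R.
Definition last_proj : 'M[R]_(1, K.+1) := \matrix_(i, j) (j == ord_max)%:R.
Definition ramp : 'cV[R]_N := \col_i i%:R.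
Definition findiff_mx : 'M[R]_N := \matrix_(n, i) (h ^- n * 'C(n, i)%:R * (-1) ^+ (n - i)).

Definition layer1 : layer R K.+1 (N + N) :=
  Layer ((h / 2) *: col_mx (beta *m coeff_proj) (ramp *m last_proj))
        (Some (const_mx (- c1))) true.

Definition layer2 : layer R (N + N) (N + N) :=
  Layer (block_mx (k1 / h)%:M 0 0 (k1 *: findiff_mx))
        (Some (col_mx (const_mx ((k1 - 1) / h)) (k1 *: findiff_mx *m const_mx 1))) false.

Definition layer3 : layer R (N + N) (N + N + N) :=
  Layer ((g / 2) *: col_mx (col_mx (row_mx 1%:M 1%:M) (row_mx 1%:M 0)) (row_mx 0 1%:M))
        (Some (const_mx (- c2))) true.

Definition layer4 : layer R (N + N + N) 1 :=
  Layer ((k2 / g ^+ 2) *: row_mx (row_mx (const_mx 1) (- const_mx 1)) (- const_mx 1))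
        (Some (const_mx (N%:R * (1 - k2) / g ^+ 2))) false.

Definition poly_net : mlp R K.+1 1 :=
  mlp_cons layer1 (mlp_cons layer2 (mlp_cons layer3 (mlp_one layer4))).

Lemma num_weights_poly_net :
  num_weights poly_net = (10 * N ^ 2 + 2 * N * K + 12 * N + 1)%N.
Proof. rewrite /= /layer_weights /=; ring. Qed.

Lemma eval_layers34 (P Q : 'cV[R]_N) :
  eval_mlp (mlp_cons layer3 (mlp_one layer4)) (col_mx P Q) 0 0 =
  \sum_(n < N) exp_mul (tanh_exp c2) g (P n 0) (Q n 0).
Proof.
rewrite /= /eval_layer /= -!scalemxAl !mul_col_mx !mul_row_col !mul1mx !mul0mx addr0 add0r.
rewrite -[const_mx (- c2)]col_mx_const -[const_mx (- c2)]col_mx_const.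
rewrite !scale_col_mx !add_col_mx !map_col_mx !mul_row_col !mulNmx.
rewrite !mxE -!sumrB mulr_sumr.
have -> : N%:R * (1 - k2) / g ^+ 2 = \sum_(n < N) (1 - k2) / g ^+ 2.
  by rewrite sumr_const card_ord -mulrA mulr_natl.
rewrite -big_split; apply: eq_bigr => n _; rewrite !mxE /exp_mul /tanh_exp /k2 /=.
rewrite !(mulrAC g _ 2^-1); ring.
Qed.

Lemma coeff_projE (v : 'cV[R]_K.+1) :
  coeff_proj *m v = \col_k v (widen_ord (leqnSn K) k) 0.
Proof.
apply/matrixP => k j; rewrite ord1 !mxE (bigD1 (widen_ord (leqnSn K) k)) //= mxE eqxx mul1r.
by rewrite big1 ?addr0 // => i /negbTE ik; rewrite mxE ik mul0r.
Qed.

Lemma last_projE (v : 'cV[R]_K.+1) : last_proj *m v = (v ord_max 0)%:M.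
Proof.
apply/matrixP => i j; rewrite !ord1 !mxE (bigD1 ord_max) //= mxE eqxx mul1r.
by rewrite big1 ?addr0 // => k /negbTE kmax; rewrite mxE kmax mul0r.
Qed.

Lemma sum_binomial_widen n (F : nat -> R) : (n < N)%N ->
  \sum_(i < N) 'C(n, i)%:R * F i = \sum_(i < n.+1) 'C(n, i)%:R * F i.
Proof.
move=> nN; rewrite -!(big_mkord xpredT (fun i => 'C(n, i)%:R * F i)).
rewrite (big_cat_nat (leq0n n.+1) nN) /= [X in _ + X]big1_seq ?addr0 // => i.
by case/andP => _; rewrite mem_index_iota => /andP[ni _]; rewrite bin_small // mul0r.
Qed.

Definition poly_coeffs (v : 'cV[R]_K.+1) (n : 'I_N) :=
  \sum_(k < K) beta n k * v (widen_ord (leqnSn K) k) 0.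

Lemma eval_layers12 (v : 'cV[R]_K.+1) :
  eval_layer layer2 (eval_layer layer1 v) =
  col_mx (\col_n exp_lin (tanh_exp c1) h (poly_coeffs v n))
         (\col_n exp_pow (tanh_exp c1) h (v ord_max 0) n).
Proof.
rewrite /eval_layer /= -[(h / 2) *: _ *m v]scalemxAl [col_mx _ _ *m v]mul_col_mx.
rewrite -!mulmxA coeff_projE last_projE.
rewrite -[const_mx (- c1)]col_mx_const scale_col_mx add_col_mx map_col_mx.
rewrite mul_block_col !mul0mx addr0 add0r mul_scalar_mx mul_mx_scalar add_col_mx.
set x := v ord_max 0; congr col_mx; apply/matrixP => n j; rewrite ord1 !mxE.
  rewrite /exp_lin /tanh_exp -/k1 /poly_coeffs (mulrAC h _ 2^-1).
  under eq_bigr do rewrite mxE.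
  set t := tanh _; ring.
rewrite /exp_pow.
rewrite -(sum_binomial_widen (fun i => (-1) ^+ (n - i) * tanh_exp c1 (i%:R * (h * x))) (ltn_ord n)).
rewrite mulr_sumr -big_split; apply: eq_bigr => i _; rewrite !mxE /tanh_exp -/k1.
rewrite /= (_ : h / 2 * (x * i%:R) = i%:R * (h * x) / 2); last by ring.
ring.
Qed.

Lemma eval_poly_net (v : 'cV[R]_K.+1) : eval_mlp poly_net v 0 0 =
  \sum_(n < N) approx_monomial h c1 g c2 (poly_coeffs v n) (v ord_max 0) n.
Proof.
rewrite (_ : eval_mlp poly_net v = eval_mlp (mlp_cons layer3 (mlp_one layer4))
  (eval_layer layer2 (eval_layer layer1 v))) //.
by rewrite eval_layers12 eval_layers34; apply: eq_bigr => n _; rewrite !mxE.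
Qed.

End Network.

Section SineSum.
Variables (R : realType) (K : nat) (A : R).

Definition sin_taylor_mx N : 'M[R]_(N, K) := \matrix_(n, k) sin_coeff (2 * pi * k.+1%:R) n.

Lemma freq_le (k : 'I_K) : 0 <= 2 * (pi : R) * k.+1%:R <= 8 * K%:R.
Proof.
have pi4 : (pi : R) <= 4 by have := @pihalf_lt2 R; lra.
have kK : k.+1%:R <= K%:R :> R by rewrite ler_nat.
have := @pi_ge0 R; have : 0 <= k.+1%:R :> R by []; nra.
Qed.

Lemma sin_taylor_coeff_le N (a : 'I_K -> R) (n : 'I_N) : (forall k, `|a k| <= A) ->
  `|\sum_(k < K) sin_taylor_mx N n k * a k| <= K%:R * (expR (expR 1 * (8 * K%:R)) * A).
Proof.
move=> aA; apply: (le_trans (ler_norm_sum _ _ _)).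
rewrite mulr_natl -[X in _ *+ X](card_ord K) -sumr_const.
apply: ler_sum => k _; rewrite normrM mxE; apply: ler_pM => //.
apply: (le_trans (sin_coeff_le _ _)).
rewrite ler_expR lerBlDr (ler_wpDr (ler0n _ _)) // ler_pM2l ?expR_gt0 //.
by have /andP[f0 f8] := freq_le k; rewrite ger0_norm.
Qed.

Lemma sin_taylor_err N (a : 'I_K -> R) x : (forall k, `|a k| <= A) -> 0 <= x <= 1 ->
  `|\sum_(n < N) (\sum_(k < K) sin_taylor_mx N n k * a k) * x ^+ n - Rsum a x|
    <= K%:R * (A * (2 * expR (expR 1 * (8 * K%:R) - N%:R))).
Proof.
move=> aA /andP[x0 x1].
have -> : \sum_(n < N) (\sum_(k < K) sin_taylor_mx N n k * a k) * x ^+ n =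
    \sum_(k < K) a k * series (sin_coeff (2 * pi * k.+1%:R * x)) N.
  under eq_bigr do rewrite mulr_suml.
  rewrite exchange_big /=; apply: eq_bigr => k _.
  rewrite /series /= big_mkord mulr_sumr; apply: eq_bigr => n _.
  by rewrite mxE [in RHS]sin_coeffM; ring.
rewrite /Rsum -sumrB; apply: (le_trans (ler_norm_sum _ _ _)).
rewrite (mulr_natl (A * _)) -[X in (A * _) *+ X](card_ord K) -sumr_const.
apply: ler_sum => k _; rewrite -mulrBr normrM distrC; apply: ler_pM => //.
apply: (le_trans (sin_series_tail _ _)); rewrite ler_pM2l // ler_expR lerD2r.
have /andP[f0 f8] := freq_le k.
rewrite ler_pM2l ?expR_gt0 // normrM (ger0_norm f0) (ger0_norm x0).
by apply: le_trans f8; apply: ler_piMr.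
Qed.

Lemma sine_net_exists N eps : 0 < A -> 0 < eps <= 1 ->
  K%:R * (A * (2 * expR (expR 1 * (8 * K%:R) - N%:R))) <= eps / 2 ->
  exists net : mlp R K.+1 1,
    num_weights net = (10 * N ^ 2 + 2 * N * K + 12 * N + 1)%N /\
    forall v : 'cV[R]_K.+1,
      (forall k : 'I_K, `|v (widen_ord (leqnSn K) k) 0| <= A) -> 0 <= v ord_max 0 <= 1 ->
      `|eval_mlp net v 0 0 - Rsum (fun k => v (widen_ord (leqnSn K) k) 0) (v ord_max 0)| <= eps.
Proof.
move=> A0 /andP[eps0 eps1] tail.
have B0 : 0 <= K%:R * (expR (expR 1 * (8 * K%:R)) * A).
  by rewrite mulr_ge0 // mulr_ge0 ?expR_ge0 // ltW.
have eps2 : 0 < eps / 2 <= 1 by apply/andP; split; lra.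
have [h [c1 [g [c2 approx]]]] := approx_poly_exists N B0 eps2.
exists (poly_net (sin_taylor_mx N) h c1 g c2); split; first exact: num_weights_poly_net.
move=> v aA x01; rewrite eval_poly_net.
have := approx _ _ (fun n => sin_taylor_coeff_le n aA) x01.
have := sin_taylor_err N aA x01.
rewrite /poly_coeffs => taylor net_err.
apply: le_trans (ler_distD (\sum_(n < N) (\sum_(k < K) sin_taylor_mx N n k *
  v (widen_ord (leqnSn K) k) 0) * v ord_max 0 ^+ n) _ _) _.
lra.
Qed.

End SineSum.

Lemma poly_net_weights_le (N K : nat) : (1 <= N)%N ->
  (10 * N ^ 2 + 2 * N * K + 12 * N + 1 <= 25 * (N + K) ^ 2)%N.
Proof. by move=> N1; nia. Qed.

Lemma expR_truncS_le (R : realType) (a z : R) : 0 < z ->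
  expR (a - (Num.truncn (a + `|ln z|)).+1%:R) <= z^-1.
Proof.
move=> z0; rewrite -[z in z^-1]lnK ?posrE // -expRN ler_expR.
have : ln z <= `|ln z| := ler_norm _.
by have := truncnS_gt (a + `|ln z|); lra.
Qed.

Lemma truncS_order_le (R : realType) (a b x L : R) (K : nat) :
  0 <= a -> 0 <= b -> 0 <= L -> (1 <= K)%N -> 0 <= x <= b + L ->
  (Num.truncn (a * K%:R + x)).+1%:R + K%:R <= (a + b + 2) * (K%:R + L).
Proof.
move=> a0 b0 L0 K1 /andP[x0 xbL]; have K1' : 1 <= K%:R :> R by rewrite ler1n.
have trunc_le : (Num.truncn (a * K%:R + x))%:R <= a * K%:R + x.
  by rewrite truncn_le // addr_ge0 // mulr_ge0.
rewrite -addn1 natrD; nra.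
Qed.

Lemma weights_order_le (R : realType) (N K : nat) (c L : R) :
  (1 <= N)%N -> (1 <= K)%N -> 0 <= L -> N%:R + K%:R <= c * (K%:R + L) ->
  (10 * N ^ 2 + 2 * N * K + 12 * N + 1)%:R <= 50 * c ^+ 2 * (K%:R ^+ 2 + K%:R * L ^+ 2).
Proof.
move=> N1 K1 L0 NK; have K1' : 1 <= K%:R :> R by rewrite ler1n.
apply: le_trans (_ : 25 * (N%:R + K%:R) ^+ 2 <= _).
  by rewrite -natrD -natrX -natrM ler_nat poly_net_weights_le.
have NK0 : 0 <= N%:R + K%:R :> R by [].
have sq : (N%:R + K%:R) ^+ 2 <= c ^+ 2 * (K%:R + L) ^+ 2.
  by rewrite -exprMn lerXn2r ?nnegrE // (le_trans NK0).
have KL : (K%:R + L) ^+ 2 <= 2 * (K%:R ^+ 2 + K%:R * L ^+ 2).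
  have : L ^+ 2 <= K%:R * L ^+ 2 by apply: ler_peMl; rewrite ?sqr_ge0.
  by have := sqr_ge0 (K%:R - L); nra.
have := ler_wpM2l (sqr_ge0 c) KL; nra.
Qed.

Lemma sine_tail_le (R : realType) (A eps : R) (K : nat) : 0 < A -> 0 < eps -> (1 <= K)%N ->
  K%:R * (A * (2 * expR (expR 1 * (8 * K%:R) -
    (Num.truncn (8 * expR 1 * K%:R + `|ln (4 * A * (K%:R / eps))|)).+1%:R))) <= eps / 2.
Proof.
move=> A0 eps0 K1; have K0 : 0 < K%:R :> R by rewrite ltr0n.
set z := 4 * A * _; have z0 : 0 < z by rewrite !mulr_gt0 // invr_gt0.
apply: (@le_trans _ _ (K%:R * (A * (2 * z^-1)))).
  by rewrite !ler_pM2l // mulrCA mulrA; exact: expR_truncS_le.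
by rewrite /z le_eqVlt; apply/orP; left; apply/eqP; field; rewrite !gt_eqF.
Qed.

Theorem theorem3 (R : realType) (A : R) (hA : 0 < A) :
  exists C : R, forall (K : nat), (1 <= K)%N -> forall eps : R, 0 < eps < 1 ->
    exists N : mlp R K.+1 1,
      (num_weights N)%:R <= C * ((K%:R) ^+ 2 + K%:R * (ln (K%:R / eps)) ^+ 2) /\
      forall v : 'cV[R]_K.+1,
        (forall k : 'I_K, `|v (widen_ord (leqnSn K) k) 0| <= A) ->
        0 <= v ord_max 0 <= 1 ->
        `|eval_mlp N v 0 0 - Rsum (fun k : 'I_K => v (widen_ord (leqnSn K) k) 0) (v ord_max 0)| <= eps.
Proof.
pose c := 8 * expR 1 + `|ln (4 * A)| + 2.
exists (50 * c ^+ 2) => K K1 eps /andP[eps0 eps1].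
have Keps : 1 < K%:R / eps.
  by rewrite ltr_pdivlMr // mul1r; apply: lt_le_trans eps1 _; rewrite ler1n.
have tail := sine_tail_le hA eps0 K1.
have eps01 : 0 < eps <= 1 by rewrite eps0 ltW.
have [net [size net_err]] := sine_net_exists hA eps01 tail.
exists net; split => //; rewrite size.
have L0 : 0 <= ln (K%:R / eps) by rewrite ln_ge0 // ltW.
apply: weights_order_le => //; apply: truncS_order_le => //.
rewrite normr_ge0 lnM ?posrE ?(lt_trans ltr01 Keps) ?mulr_gt0 //=.
by apply: le_trans (ler_normD _ _) _; rewrite (ger0_norm L0).
Qed.
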